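(* There exists a non-trivial model of dependent type theory with a cumulative hierarchy of universes in the style of Agda, in which, for every level $\ell$, every type $A : \mathcal{U}_\ell$ and every function $f : \mathcal{U}_\ell \to A$, the function $f$ is constant, i.e.\ for all $X, Y : \mathcal{U}_\ell$ the interpretation satisfies $f\,X = f\,Y$.
   Context: Dependent type theory (DTT) here means Martin-Löf-style type theory with dependent function types $(x : A) \to B(x)$ and a hierarchy of universes $\mathcal{U}_\ell$ indexed by levels $\ell \in \mathbb{N}$, where $\mathcal{U}_\ell : \mathcal{U}_{\ell+1}$. ''Agda-style cumulativity'' means that cumulativity is not implicit subtyping but is given by a lifting operation: for every $X : \mathcal{U}_\ell$ there is a type $\mathrm{Lift}\,X : \mathcal{U}_{\ell+1}$ together with an isomorphism $\mathrm{Lift}\,X \cong X$. A model is non-trivial if it does not identify all terms/types (in particular it is not the model in which every type is a singleton; e.g.\ some type is uninhabited). A function $f : \mathcal{U}_\ell \to A$ is constant if $f\,X$ and $f\,Y$ are equal for all $X, Y : \mathcal{U}_\ell$. Note that the hypothesis $A : \mathcal{U}_\ell$ excludes e.g.\ $A = \mathcal{U}_\ell$ (which lives in $\mathcal{U}_{\ell+1}$), for which the identity function would be a non-constant example. *)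

(* A model is a category with families (CwF) whose types are stratified
   by levels (as in Agda: Set l), presented in the "sorted" style: terms of
   level l in context G form a type [Tm l G] together with a typing map
   [tp : Tm l G -> Ty l G] (so that all laws are ordinary equations). *)

From Stdlib Require Import PeanoNat.

Unset Implicit Arguments.


Record CwF := {
  Ctx : Type;
  Sub : Ctx -> Ctx -> Type;                      (* Sub D G : morphisms D -> G *)
  sid : forall G, Sub G G;
  scomp : forall G D T, Sub D G -> Sub T D -> Sub T G;
  scomp_idl : forall G D (s : Sub D G), scomp _ _ _ (sid G) s = s;
  scomp_idr : forall G D (s : Sub D G), scomp _ _ _ s (sid D) = s;
  scomp_assoc : forall G D T Q (s : Sub D G) (t : Sub T D) (u : Sub Q T),
      scomp _ _ _ (scomp _ _ _ s t) u = scomp _ _ _ s (scomp _ _ _ t u);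
  emp : Ctx;
  eps : forall G, Sub G emp;
  eps_uniq : forall G (s : Sub G emp), s = eps G;
  Ty : nat -> Ctx -> Type;
  tsub : forall l G D, Ty l G -> Sub D G -> Ty l D;
  tsub_id : forall l G (A : Ty l G), tsub _ _ _ A (sid G) = A;
  tsub_comp : forall l G D T (A : Ty l G) (s : Sub D G) (t : Sub T D),
      tsub _ _ _ A (scomp _ _ _ s t) = tsub _ _ _ (tsub _ _ _ A s) t;
  Tm : nat -> Ctx -> Type;
  tp : forall l G, Tm l G -> Ty l G;
  msub : forall l G D, Tm l G -> Sub D G -> Tm l D;
  tp_msub : forall l G D (a : Tm l G) (s : Sub D G),
      tp _ _ (msub _ _ _ a s) = tsub _ _ _ (tp _ _ a) s;
  msub_id : forall l G (a : Tm l G), msub _ _ _ a (sid G) = a;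
  msub_comp : forall l G D T (a : Tm l G) (s : Sub D G) (t : Sub T D),
      msub _ _ _ a (scomp _ _ _ s t) = msub _ _ _ (msub _ _ _ a s) t;
  ext : forall l G, Ty l G -> Ctx;
  wk : forall l G (A : Ty l G), Sub (ext _ _ A) G;
  vz : forall l G (A : Ty l G), Tm l (ext _ _ A);
  tp_vz : forall l G (A : Ty l G), tp _ _ (vz _ _ A) = tsub _ _ _ A (wk _ _ A);
  spair : forall l G D (A : Ty l G) (s : Sub D G) (a : Tm l D),
      tp _ _ a = tsub _ _ _ A s -> Sub D (ext _ _ A);
  wk_spair : forall l G D (A : Ty l G) (s : Sub D G) (a : Tm l D)
      (e : tp _ _ a = tsub _ _ _ A s),
      scomp _ _ _ (wk _ _ A) (spair _ _ _ A s a e) = s;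
  vz_spair : forall l G D (A : Ty l G) (s : Sub D G) (a : Tm l D)
      (e : tp _ _ a = tsub _ _ _ A s),
      msub _ _ _ (vz _ _ A) (spair _ _ _ A s a e) = a;
  spair_eta : forall l G D (A : Ty l G) (t : Sub D (ext _ _ A))
      (e : tp _ _ (msub _ _ _ (vz _ _ A) t) = tsub _ _ _ A (scomp _ _ _ (wk _ _ A) t)),
      spair _ _ _ A (scomp _ _ _ (wk _ _ A) t) (msub _ _ _ (vz _ _ A) t) e = t
}.

Arguments sid {c} G.
Arguments eps {c} G.
Arguments tsub_id {c l G}.
Arguments tsub_comp {c l G D T}.
Arguments tp_vz {c l G}.
Arguments scomp {c G D T}.
Arguments emp {c}.
Arguments tsub {c l G D}.
Arguments tp {c l G}.
Arguments msub {c l G D}.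
Arguments ext {c l} G.
Arguments wk {c l G}.
Arguments vz {c l G}.
Arguments spair {c l G D}.

Definition lift_sub {C : CwF} {l} {G D : Ctx C} (A : Ty C l G) (s : Sub C D G) :
    Sub C (ext D (tsub A s)) (ext G A) :=
  spair A (scomp s (wk (tsub A s))) (vz (tsub A s))
    (eq_trans (tp_vz (tsub A s)) (eq_sym (tsub_comp A s (wk (tsub A s))))).

Definition sgl {C : CwF} {l} {G : Ctx C} (A : Ty C l G) (a : Tm C l G)
    (e : tp a = A) : Sub C G (ext G A) :=
  spair A (sid G) a (eq_trans e (eq_sym (tsub_id A))).

Record PiStr (C : CwF) := {
  Pi : forall {l1 l2 G} (A : Ty C l1 G), Ty C l2 (ext G A) -> Ty C (Nat.max l1 l2) G;
  Pi_sub : forall l1 l2 G D (A : Ty C l1 G) (B : Ty C l2 (ext G A)) (s : Sub C D G),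
      tsub (Pi A B) s = Pi (tsub A s) (tsub B (lift_sub A s));
  lam : forall {l1 l2 G} (A : Ty C l1 G), Tm C l2 (ext G A) -> Tm C (Nat.max l1 l2) G;
  tp_lam : forall l1 l2 G (A : Ty C l1 G) (t : Tm C l2 (ext G A)),
      tp (lam A t) = Pi A (tp t);
  (* "unlam": application to the last variable *)
  app : forall {l1 l2 G} (A : Ty C l1 G) (B : Ty C l2 (ext G A)) (f : Tm C (Nat.max l1 l2) G),
      tp f = Pi A B -> Tm C l2 (ext G A);
  tp_app : forall l1 l2 G (A : Ty C l1 G) (B : Ty C l2 (ext G A)) f (e : tp f = Pi A B),
      tp (app A B f e) = B;
  Pi_beta : forall l1 l2 G (A : Ty C l1 G) (t : Tm C l2 (ext G A)) (e : tp (lam A t) = Pi A (tp t)),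
      app A (tp t) (lam A t) e = t;
  Pi_eta : forall l1 l2 G (A : Ty C l1 G) (B : Ty C l2 (ext G A)) f (e : tp f = Pi A B),
      lam A (app A B f e) = f;
  lam_sub : forall l1 l2 G D (A : Ty C l1 G) (t : Tm C l2 (ext G A)) (s : Sub C D G),
      msub (lam A t) s = lam (tsub A s) (msub t (lift_sub A s))
}.

Arguments Pi {C p l1 l2 G}.
Arguments lam {C p l1 l2 G}.
Arguments app {C p l1 l2 G}.

Definition apply {C : CwF} {P : PiStr C} {l1 l2} {G : Ctx C} (A : Ty C l1 G)
    (B : Ty C l2 (ext G A)) (f : Tm C (Nat.max l1 l2) G) (ef : tp f = Pi (p:=P) A B)
    (a : Tm C l1 G) (ea : tp a = A) : Tm C l2 G :=
  msub (app A B f ef) (sgl A a ea).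

(* Universe hierarchy (Coquand-style Tarski universes): U l : Ty (S l),
   so that U_l : U_(l+1) via code (U l). *)
Record UnivStr (C : CwF) := {
  U : forall l G, Ty C (S l) G;
  U_sub : forall l G D (s : Sub C D G), tsub (U l G) s = U l D;
  El : forall {l G} (a : Tm C (S l) G), tp a = U l G -> Ty C l G;
  El_sub : forall l G D (a : Tm C (S l) G) (e : tp a = U l G) (s : Sub C D G)
      (e' : tp (msub a s) = U l D),
      tsub (El a e) s = El (msub a s) e';
  code : forall {l G}, Ty C l G -> Tm C (S l) G;
  tp_code : forall l G (A : Ty C l G), tp (code A) = U l G;
  El_code : forall l G (A : Ty C l G) (e : tp (code A) = U l G), El (code A) e = A;
  code_El : forall l G (a : Tm C (S l) G) (e : tp a = U l G), code (El a e) = a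
}.

Arguments U {C u}.
Arguments El {C u l G}.
Arguments code {C u l G}.

Record LiftStr (C : CwF) := {
  Lift : forall {l G}, Ty C l G -> Ty C (S l) G;
  Lift_sub : forall l G D (A : Ty C l G) (s : Sub C D G),
      tsub (Lift A) s = Lift (tsub A s);
  up : forall {l G} (A : Ty C l G) (a : Tm C l G), tp a = A -> Tm C (S l) G;
  tp_up : forall l G (A : Ty C l G) a (e : tp a = A), tp (up A a e) = Lift A;
  down : forall {l G} (A : Ty C l G) (b : Tm C (S l) G), tp b = Lift A -> Tm C l G;
  tp_down : forall l G (A : Ty C l G) b (e : tp b = Lift A), tp (down A b e) = A;
  down_up : forall l G (A : Ty C l G) a (e : tp a = A) (e' : tp (up A a e) = Lift A),
      down A (up A a e) e' = a;
  up_down : forall l G (A : Ty C l G) b (e : tp b = Lift A) (e' : tp (down A b e) = A),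
      up A (down A b e) e' = b;
  up_sub : forall l G D (A : Ty C l G) a (e : tp a = A) (s : Sub C D G)
      (e' : tp (msub a s) = tsub A s),
      msub (up A a e) s = up (tsub A s) (msub a s) e'
}.

Definition nontrivial (C : CwF) : Prop :=
  exists l (A : Ty C l emp), forall a : Tm C l emp, tp a <> A.

From Stdlib Require Import Arith Lia.
From Stdlib Require Import FunctionalExtensionality PropExtensionality ProofIrrelevance ClassicalEpsilon.

(* A realizability model whose realizability relation is graded by universe
   levels.  An element of a type is a class of realizers; at levels at or
   above the type's own level, [d] realizes [x] exactly when [d] lies in [x],
   while below it realizability may be coarser.  The universe [U l] is as
   coarse as possible at levels [<= l]: there every realizer realizes every
   code.  A function [f : U l -> A] with [A : U l] is tracked at level [l] by
   one realizer [e], which therefore sends the common realizer of all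
   [X : U l] to a single value [v]; as [A] is modest at level [l], [v]
   determines the class [f X], so [f X = f Y].  The empty type makes the model
   non-trivial. *)

(* Combinators of a deterministic applicative structure, [ap e d v] reading
   "e applied to d yields v", together with codes for types. *)
Inductive D : Type :=
| dId | dFst | dSnd | dComp (f g : D) | dPairF (f g : D) | dCurry (f : D)
| dClo (f a : D) | dConst (c : D) | dPair (a b : D) | dAp (f g : D)
| cEmp | cU (k : nat) | cLift (c : D) | cPi (l1 l2 : nat) (a b : D)
| dMkPi (l1 l2 : nat) (f g : D) | dMkLift (f : D).

Inductive ap : D -> D -> D -> Prop :=
| ap_id x : ap dId x x
| ap_fst a b : ap dFst (dPair a b) a
| ap_snd a b : ap dSnd (dPair a b) b
| ap_comp f g x w v : ap g x w -> ap f w v -> ap (dComp f g) x v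
| ap_pairf f g x v w : ap f x v -> ap g x w -> ap (dPairF f g) x (dPair v w)
| ap_curry f x : ap (dCurry f) x (dClo f x)
| ap_clo f a x v : ap f (dPair a x) v -> ap (dClo f a) x v
| ap_const c x : ap (dConst c) x c
| ap_ap f g x w1 w2 v : ap f x w1 -> ap g x w2 -> ap w1 w2 v -> ap (dAp f g) x v
| ap_mkpi l1 l2 f g x v w : ap f x v -> ap g x w -> ap (dMkPi l1 l2 f g) x (cPi l1 l2 v w)
| ap_mklift f x v : ap f x v -> ap (dMkLift f) x (cLift v).

Lemma ap_det f x v : ap f x v -> forall v', ap f x v' -> v = v'.
Proof.
  induction 1; intros v' H'; inversion H'; subst; auto;
  repeat match goal with
  | IH : forall v', ap ?f ?x v' -> ?w = v', H : ap ?f ?x ?w2 |- _ =>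
      pose proof (IH _ H); clear H; subst
  end; auto.
Qed.

Lemma sig_eq {A : Type} {P : A -> Prop} (x y : sig P) : proj1_sig x = proj1_sig y -> x = y.
Proof. destruct x as [x px], y as [y py]; simpl; intros ->; f_equal; apply proof_irrelevance. Qed.

(** * Graded assemblies *)

(* [rlz T j d x]: [d] realizes the element [x] of [T] at level [j]. *)
Record Asm := mkAsm { mem : (D -> Prop) -> Prop ; rlz : nat -> D -> (D -> Prop) -> Prop }.

Record Modest (l : nat) (T : Asm) : Prop := {
  modest_total : forall x, mem T x -> forall j, exists d, rlz T j d x;
  modest_mem : forall j d x, rlz T j d x -> mem T x;
  modest_high : forall j d x, l <= j -> (rlz T j d x <-> mem T x /\ x d);
  modest_disjoint : forall x y d, mem T x -> mem T y -> x d -> y d -> x = y }.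

Lemma Modest_le l l' T : l <= l' -> Modest l T -> Modest l' T.
Proof. intros H [a b c d]; constructor; auto. intros; apply c; lia. Qed.

Lemma Modest_elem_inhabited l T x : Modest l T -> mem T x -> exists d, x d.
Proof.
  intros W m. destruct (modest_total _ _ W x m l) as [d r].
  exists d. apply (modest_high _ _ W l d x (le_n _)) in r. tauto.
Qed.

Definition EmptyAsm := mkAsm (fun _ => False) (fun _ _ _ => False).

Definition is_class (R : D -> Asm -> Prop) (X : D -> Prop) :=
  exists c T, R c T /\ X = (fun c' => R c' T).

Definition UAsm (k : nat) (R : D -> Asm -> Prop) :=
  mkAsm (is_class R) (fun j d X => is_class R X /\ (j <= k \/ X d)).

Lemma UAsm_rlz_low k R j d X : j <= k -> mem (UAsm k R) X -> rlz (UAsm k R) j d X.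
Proof. split; auto. Qed.

Definition pi_class (A : Asm) (phi : (D -> Prop) -> (D -> Prop)) : D -> Prop :=
  fun e => forall x r, mem A x -> x r -> exists v, ap e r v /\ phi x v.

Definition TrackedSection (A : Asm) (B : (D -> Prop) -> Asm) phi :=
  (forall x, mem A x -> mem (B x) (phi x)) /\
  (forall j, exists e, forall x r, mem A x -> rlz A j r x ->
      exists v, ap e r v /\ rlz (B x) j v (phi x)).

Definition PiAsm (A : Asm) (B : (D -> Prop) -> Asm) :=
  mkAsm (fun f => exists phi, TrackedSection A B phi /\ f = pi_class A phi)
        (fun j e f => exists phi, TrackedSection A B phi /\ f = pi_class A phi /\
           forall x r, mem A x -> rlz A j r x ->
             exists v, ap e r v /\ rlz (B x) j v (phi x)).

Lemma TrackedSection_uniform_const A B T phi j d :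
  Modest j T -> TrackedSection A B phi ->
  (forall x, mem A x -> B x = T) -> (forall x, mem A x -> rlz A j d x) ->
  forall x y, mem A x -> mem A y -> phi x = phi y.
Proof.
  intros WT [_ track] EB uniform x y mx my.
  destruct (track j) as [e He].
  destruct (He x d mx (uniform x mx)) as [v [hv rv]].
  destruct (He y d my (uniform y my)) as [v' [hv' rv']].
  rewrite <- (ap_det _ _ _ hv _ hv') in rv'.
  rewrite EB in rv, rv' by assumption.
  apply (modest_high _ _ WT j v _ (le_n _)) in rv, rv'.
  apply (modest_disjoint _ _ WT _ _ v); tauto.
Qed.

Lemma pi_class_ext A phi psi :
  (forall x, mem A x -> phi x = psi x) -> pi_class A phi = pi_class A psi.
Proof.
  intros E. extensionality e. apply propositional_extensionality. unfold pi_class.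
  split; intros H x r m hr; destruct (H x r m hr) as [v [? ?]]; exists v; split; auto;
    [rewrite <- E|rewrite E]; auto.
Qed.

Lemma TrackedSection_ext A B B' phi :
  (forall x, mem A x -> B x = B' x) -> TrackedSection A B phi -> TrackedSection A B' phi.
Proof.
  intros E [h1 h2]. split.
  - intros x m. rewrite <- E; auto.
  - intros j. destruct (h2 j) as [e He]. exists e. intros x r m rr.
    destruct (He x r m rr) as [v [? ?]]. exists v. rewrite <- E; auto.
Qed.

Lemma PiAsm_ext A B B' : (forall x, mem A x -> B x = B' x) -> PiAsm A B = PiAsm A B'.
Proof.
  intros E. assert (E' : forall x, mem A x -> B' x = B x) by (intros; symmetry; auto).
  unfold PiAsm. f_equal.
  - extensionality f. apply propositional_extensionality. split; intros [phi [o e]];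
      exists phi; split; auto; eapply TrackedSection_ext; eauto.
  - extensionality j. extensionality e. extensionality f.
    apply propositional_extensionality. split; intros [phi [o [q t]]];
      exists phi; (split; [eapply TrackedSection_ext; eauto|split; auto]);
      intros x r m rr; destruct (t x r m rr) as [v [? ?]]; exists v;
      [rewrite <- E|rewrite E]; auto.
Qed.

Lemma Modest_Pi l1 l2 A B : Modest l1 A -> (forall x, mem A x -> Modest l2 (B x)) ->
  Modest (Nat.max l1 l2) (PiAsm A B).
Proof.
  intros WA WB. constructor; simpl.
  - intros f [phi [[o1 o2] ->]] j. destruct (o2 j) as [e He]. exists e.
    exists phi. split; [split; auto|split; auto].
  - intros j d f [phi [o [-> _]]]. exists phi; auto.
  - intros j e f hj. split.
    + intros [phi [o [-> t]]]. split; [exists phi; auto|].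
      intros x r m hr.
      assert (rlz A j r x) as rr by (apply (modest_high _ _ WA); [lia|auto]).
      destruct (t x r m rr) as [v [hv rv]]. exists v; split; auto.
      apply (modest_high _ _ (WB x m) j v (phi x)) in rv; [tauto|lia].
    + intros [[phi [o ->]] he]. exists phi. split; [exact o|split; [reflexivity|]].
      intros x r m rr. apply (modest_high _ _ WA) in rr; [|lia]. destruct rr as [_ xr].
      destruct (he x r m xr) as [v [hv pv]]. exists v; split; auto.
      apply (modest_high _ _ (WB x m)); [lia|]. split; auto. apply (proj1 o); auto.
  - intros f g e [phi [o ->]] [psi [o' ->]] h1 h2. apply pi_class_ext.
    intros x m. destruct (Modest_elem_inhabited _ _ _ WA m) as [r hr].
    destruct (h1 x r m hr) as [v [hv pv]]. destruct (h2 x r m hr) as [v' [hv' pv']].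
    rewrite <- (ap_det _ _ _ hv _ hv') in pv'.
    apply (modest_disjoint _ _ (WB x m)) with v; auto;
      [apply (proj1 o)|apply (proj1 o')]; auto.
Qed.

(* Defined from the class [F] alone: the section representing [F] is not
   part of the data of an element of a Pi type. *)
Definition app_class (T : Asm) (F x : D -> Prop) : D -> Prop :=
  fun w => exists e r v y, F e /\ x r /\ ap e r v /\ mem T y /\ y v /\ y w.

Lemma app_class_pi l1 l2 A B phi x : Modest l1 A -> (forall x, mem A x -> Modest l2 (B x)) ->
  TrackedSection A B phi -> mem A x -> app_class (B x) (pi_class A phi) x = phi x.
Proof.
  intros WA WB [o1 o2] m. extensionality w. apply propositional_extensionality. split.
  - intros [e [r [v [y [he [hr [hv [my [yv yw]]]]]]]]].
    destruct (he x r m hr) as [v' [hv' pv']]. rewrite (ap_det _ _ _ hv' _ hv) in pv'.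
    rewrite (modest_disjoint _ _ (WB x m) (phi x) y v (o1 x m) my pv' yv). exact yw.
  - intros pw. destruct (o2 (l1 + l2)) as [e He].
    destruct (Modest_elem_inhabited _ _ _ WA m) as [r hr].
    assert (HP : pi_class A phi e).
    { intros x' r' m' hr'. destruct (He x' r' m') as [v [hv rv]].
      - apply (modest_high _ _ WA); [lia|auto].
      - exists v; split; auto. apply (modest_high _ _ (WB x' m')) in rv; [tauto|lia]. }
    destruct (HP x r m hr) as [v [hv pv]].
    exists e, r, v, (phi x). repeat split; auto.
Qed.

(** * Interpretation of codes *)

Inductive denF (P : nat -> D -> Asm -> Prop) : nat -> D -> Asm -> Prop :=
| dn_emp : denF P 0 cEmp EmptyAsm
| dn_U k : denF P (S k) (cU k) (UAsm k (P k))
| dn_Lift k c T : denF P k c T -> denF P (S k) (cLift c) T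
| dn_Pi l1 l2 a b A B : denF P l1 a A ->
    (forall x, mem A x -> exists s, x s) ->
    (forall x s, mem A x -> x s -> exists c, ap b s c) ->
    (forall x s c, mem A x -> x s -> ap b s c -> denF P l2 c (B x)) ->
    denF P (Nat.max l1 l2) (cPi l1 l2 a b) (PiAsm A B).

(* The intended interpretation is the fixed point [den = denF den]; since
   [denF P l] only consults [P] below [l], it is reached by recursion on the
   level ([den_eq]). *)
Fixpoint den_upto (n : nat) : nat -> D -> Asm -> Prop :=
  match n with 0 => denF (fun _ _ _ => False) | S n' => denF (den_upto n') end.
Definition den (l : nat) := den_upto l l.

Lemma denF_ext P Q l c T :
  denF P l c T -> (forall k, k < l -> P k = Q k) -> denF Q l c T.
Proof.
  induction 1; intros E.
  - constructor.
  - rewrite E by lia. constructor.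
  - constructor. apply IHdenF. intros; apply E; lia.
  - constructor; auto.
    + apply IHdenF. intros; apply E; lia.
    + intros x s c h1 h2 h3. eapply H3; eauto. intros; apply E; lia.
Qed.

Lemma denF_ext_eq P Q l : (forall k, k < l -> P k = Q k) -> denF P l = denF Q l.
Proof.
  intros E. extensionality c. extensionality T. apply propositional_extensionality.
  split; intros H; eapply denF_ext; eauto. intros; symmetry; auto.
Qed.

Lemma den_upto_stable n k : k <= n -> den_upto n k = den k.
Proof.
  revert k. induction n as [n IH] using lt_wf_ind. intros k Hk.
  destruct (Nat.eq_dec k n) as [->|Hne]; [reflexivity|].
  destruct n as [|n']; [lia|]. unfold den. simpl.
  destruct k as [|k'].
  - simpl. apply denF_ext_eq. intros; lia.
  - simpl. apply denF_ext_eq. intros j Hj.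
    rewrite (IH n') by lia || lia. rewrite (IH k') by lia || lia. reflexivity.
Qed.

Lemma den_eq l : den l = denF den l.
Proof.
  destruct l as [|l]; unfold den at 1; simpl.
  - apply denF_ext_eq. intros; lia.
  - apply denF_ext_eq. intros k Hk. apply den_upto_stable. lia.
Qed.

Lemma denF_functional l c T : denF den l c T -> forall T', denF den l c T' -> T = T'.
Proof.
  induction 1; intros T' H'; inversion H'; subst; auto.
  assert (A = A0) by auto. subst A0.
  apply PiAsm_ext. intros x m.
  destruct (H0 x m) as [s hs]. destruct (H1 x s m hs) as [c hc].
  eapply H3; eauto.
Qed.

Lemma den_functional l c T T' : den l c T -> den l c T' -> T = T'.
Proof. intros h h'. rewrite den_eq in h, h'. eapply denF_functional; eauto. Qed.

Lemma Modest_U k : Modest (S k) (UAsm k (den k)).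
Proof.
  constructor; simpl.
  - intros X m j. destruct (le_lt_dec j k).
    + exists dId. split; auto.
    + destruct m as [c [T [h ->]]]. exists c. split; [exists c, T; auto|]. right; auto.
  - intros j d x [? ?]; auto.
  - intros j d x hj. split; intros [a b]; split; auto. destruct b; auto; lia.
  - intros X Y d [c [T [h ->]]] [c' [T' [h' ->]]] x y.
    rewrite (den_functional _ _ _ _ x y). reflexivity.
Qed.

Lemma denF_Modest l c T : denF den l c T -> Modest l T.
Proof.
  induction 1.
  - constructor; simpl; intros; tauto.
  - apply Modest_U.
  - eapply Modest_le; [|eauto]; lia.
  - apply Modest_Pi; auto. intros x m. destruct (H0 x m) as [s hs].
    destruct (H1 x s m hs) as [c hc]. eapply H3; eauto.
Qed.

Lemma den_Modest l c T : den l c T -> Modest l T.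
Proof. intros h. rewrite den_eq in h. eapply denF_Modest; eauto. Qed.

Lemma den_emp : den 0 cEmp EmptyAsm.
Proof. rewrite den_eq. constructor. Qed.

Lemma den_U l : den (S l) (cU l) (UAsm l (den l)).
Proof. rewrite den_eq. constructor. Qed.

(* Junk unless [X] is a class of codes. *)
Definition decode l (X : D -> Prop) : Asm :=
  mkAsm (fun x => exists c T, X c /\ den l c T /\ mem T x)
        (fun j d x => exists c T, X c /\ den l c T /\ rlz T j d x).

Lemma decode_den l c T : den l c T -> decode l (fun c' => den l c' T) = T.
Proof.
  intros h. destruct T as [m r]. unfold decode. f_equal.
  - extensionality x. apply propositional_extensionality. split.
    + intros [c' [T' [h1 [h2 h3]]]]. rewrite (den_functional _ _ _ _ h2 h1) in h3. exact h3.
    + intros hm. exists c, {| mem := m; rlz := r |}. auto.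
  - extensionality j. extensionality d. extensionality x. apply propositional_extensionality. split.
    + intros [c' [T' [h1 [h2 h3]]]]. rewrite (den_functional _ _ _ _ h2 h1) in h3. exact h3.
    + intros hm. exists c, {| mem := m; rlz := r |}. auto.
Qed.

Lemma decode_class l X : is_class (den l) X ->
  exists c T, den l c T /\ X = (fun c' => den l c' T) /\ decode l X = T.
Proof. intros [c [T [h ->]]]. exists c, T. split; auto. split; auto. eapply decode_den; eauto. Qed.

Lemma Modest_decode l X : is_class (den l) X -> Modest l (decode l X).
Proof. intros H. destruct (decode_class _ _ H) as [c [T [h [_ ->]]]]. eapply den_Modest; eauto. Qed.

Lemma denF_decode l X c : is_class (den l) X -> X c -> denF den l c (decode l X).
Proof.
  intros H h. destruct (decode_class _ _ H) as [c' [T [hc [E ES]]]]. rewrite ES.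
  rewrite E in h. rewrite <- den_eq. exact h.
Qed.

(** * The category with families *)

Record Cx := mkCx { pts : Type; crel : nat -> D -> pts -> Prop;
                    ctot : forall j p, exists d, crel j d p }.

Definition tracked (Dl G : Cx) (s : pts Dl -> pts G) :=
  forall j, exists e, forall p d, crel Dl j d p -> exists v, ap e d v /\ crel G j v (s p).
Definition Sb (Dl G : Cx) := { s : pts Dl -> pts G | tracked Dl G s }.

(* Codes of a type of level [l] are tracked only above [l]: at levels [<= l]
   the universe [U l] does not track its elements at all (see [El']). *)
Definition TyP l (G : Cx) (A : pts G -> D -> Prop) :=
  (forall p, is_class (den l) (A p)) /\
  forall j, l < j -> exists e, forall p d, crel G j d p -> exists v, ap e d v /\ A p v.
Definition Ty' l G := { A : pts G -> D -> Prop | TyP l G A }.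
Definition tyf {l G} (A : Ty' l G) := proj1_sig A.

Definition TmP l (G : Cx) (A : Ty' l G) (t : pts G -> D -> Prop) :=
  (forall p, mem (decode l (tyf A p)) (t p)) /\
  forall j, exists e, forall p d, crel G j d p ->
    exists v, ap e d v /\ rlz (decode l (tyf A p)) j v (t p).
Definition Tm' l G := { At : Ty' l G * (pts G -> D -> Prop) | TmP l G (fst At) (snd At) }.

Definition tmf {l G} (a : Tm' l G) := snd (proj1_sig a).
Definition tp' {l G} (a : Tm' l G) : Ty' l G := fst (proj1_sig a).

Lemma TmE l G (a b : Tm' l G) : tp' a = tp' b -> tmf a = tmf b -> a = b.
Proof.
  intros h1 h2. apply sig_eq. destruct a as [[A t] pa], b as [[B u] pb].
  unfold tp', tmf in *; simpl in *. subst; auto.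
Qed.

Lemma TyE l G (A B : Ty' l G) : tyf A = tyf B -> A = B.
Proof. apply sig_eq. Qed.

Lemma SbE D G (s t : Sb D G) : proj1_sig s = proj1_sig t -> s = t.
Proof. apply sig_eq. Qed.

Lemma Tm'_mem l G (a : Tm' l G) A : tp' a = A -> forall p, mem (decode l (tyf A p)) (tmf a p).
Proof. intros <- p. exact (proj1 (proj2_sig a) p). Qed.

Lemma Tm'_track l G (a : Tm' l G) A : tp' a = A -> forall j, exists e, forall p d,
  crel G j d p -> exists v, ap e d v /\ rlz (decode l (tyf A p)) j v (tmf a p).
Proof. intros <- j. exact (proj2 (proj2_sig a) j). Qed.

Lemma track_Sb Dl G (s : Sb Dl G) j (P : pts G -> D -> Prop) e :
  (forall p d, crel G j d p -> exists v, ap e d v /\ P p v) ->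
  exists e', forall p d, crel Dl j d p -> exists v, ap e' d v /\ P (proj1_sig s p) v.
Proof.
  intros He. destruct (proj2_sig s j) as [es Hs]. exists (dComp e es).
  intros p d h. destruct (Hs p d h) as [w [hw cw]].
  destruct (He _ _ cw) as [v [hv cv]]. exists v. split; auto. econstructor; eauto.
Qed.

Definition sid' G : Sb G G.
Proof. exists (fun p => p). intros j. exists dId. intros p d h. exists d. split; auto. constructor. Defined.

Definition scomp' G Dl T (s : Sb Dl G) (t : Sb T Dl) : Sb T G.
Proof.
  exists (fun p => proj1_sig s (proj1_sig t p)).
  intros j. destruct (proj2_sig s j) as [es Hs]. exact (track_Sb _ _ t j _ es Hs).
Defined.

Definition emp' : Cx.
Proof. refine (mkCx unit (fun _ _ _ => True) _). intros; exists dId; auto. Defined.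

Definition eps' G : Sb G emp'.
Proof. exists (fun _ => tt). intros j. exists dId. intros p d h. exists d; split; [constructor|exact I]. Defined.

Definition tsub' l G Dl (A : Ty' l G) (s : Sb Dl G) : Ty' l Dl.
Proof.
  exists (fun p => tyf A (proj1_sig s p)). destruct (proj2_sig A) as [h1 h2]. split.
  - intros p. apply h1.
  - intros j hj. destruct (h2 j hj) as [ea Ha]. exact (track_Sb _ _ s j _ ea Ha).
Defined.

Definition msub' l G Dl (a : Tm' l G) (s : Sb Dl G) : Tm' l Dl.
Proof.
  exists (tsub' l G Dl (tp' a) s, fun p => tmf a (proj1_sig s p)).
  destruct (proj2_sig a) as [h1 h2]. split; simpl.
  - intros p. apply h1.
  - intros j. destruct (h2 j) as [ea Ha]. exact (track_Sb _ _ s j _ ea Ha).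
Defined.

Definition ext' l G (A : Ty' l G) : Cx.
Proof.
  refine (mkCx { q : pts G * (D -> Prop) | mem (decode l (tyf A (fst q))) (snd q) }
    (fun j d q => exists r s, d = dPair r s /\ crel G j r (fst (proj1_sig q)) /\
        rlz (decode l (tyf A (fst (proj1_sig q)))) j s (snd (proj1_sig q))) _).
  intros j [[p x] hx]. simpl in *. destruct (ctot G j p) as [r hr].
  destruct (modest_total _ _ (Modest_decode _ _ (proj1 (proj2_sig A) p)) x hx j) as [s hs].
  exists (dPair r s), r, s. auto.
Defined.

Definition wk' l G (A : Ty' l G) : Sb (ext' l G A) G.
Proof.
  exists (fun q => fst (proj1_sig q)). intros j. exists dFst.
  intros q d [r [s [-> [h1 h2]]]]. exists r. split; auto. constructor.
Defined.

Definition vz' l G (A : Ty' l G) : Tm' l (ext' l G A).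
Proof.
  exists (tsub' l G _ A (wk' l G A), fun q => snd (proj1_sig q)). split; simpl.
  - intros [q hq]; exact hq.
  - intros j. exists dSnd. intros q d [r [s [-> [h1 h2]]]]. exists s. split; auto. constructor.
Defined.

Definition spair' l G Dl (A : Ty' l G) (s : Sb Dl G) (a : Tm' l Dl) (e : tp' a = tsub' l G Dl A s)
  : Sb Dl (ext' l G A).
Proof.
  unshelve eexists.
  - intros p. exists (proj1_sig s p, tmf a p). exact (Tm'_mem _ _ a _ e p).
  - intros j. destruct (proj2_sig s j) as [es Hs]. destruct (Tm'_track _ _ a _ e j) as [ea Ha].
    exists (dPairF es ea). intros p d h. destruct (Hs p d h) as [v [hv cv]].
    destruct (Ha p d h) as [w [hw cw]]. exists (dPair v w). split; [constructor; auto|].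
    exists v, w. auto.
Defined.

Definition Mc : CwF.
Proof.
  unshelve refine {|
    Ctx := Cx; Sub := Sb; sid := sid'; scomp := scomp';
    emp := emp'; eps := eps';
    Ty := Ty'; tsub := tsub'; Tm := Tm'; tp := @tp'; msub := msub';
    ext := ext'; wk := wk'; vz := vz'; spair := spair' |}.
  - intros; apply SbE; reflexivity.
  - intros; apply SbE; reflexivity.
  - intros; apply SbE; reflexivity.
  - intros; apply SbE; simpl. extensionality p.
    exact (match proj1_sig s p as u return u = tt with tt => eq_refl end).
  - intros; apply TyE; reflexivity.
  - intros; apply TyE; reflexivity.
  - intros; reflexivity.
  - intros; apply TmE; [apply TyE|]; reflexivity.
  - intros; apply TmE; [apply TyE|]; reflexivity.
  - intros; reflexivity.
  - intros; apply SbE; reflexivity.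
  - intros. apply TmE; [|reflexivity].
    transitivity (tsub' _ _ _ A s); [apply TyE; reflexivity|symmetry; exact e].
  - intros. apply SbE. simpl. extensionality p. apply sig_eq. simpl.
    unfold tmf; simpl. symmetry; apply surjective_pairing.
Defined.

(** * Dependent function types *)

Section PiType.
Context (l1 l2 : nat) (G : Cx) (A : Ty' l1 G).

Definition dom p := decode l1 (tyf A p).

Lemma Modest_dom p : Modest l1 (dom p).
Proof. apply Modest_decode, (proj1 (proj2_sig A)). Qed.

Section Codomain.
Context (B : Ty' l2 (ext' l1 G A)).

(* Outside the domain the family is junk; only its values on [dom p] matter. *)
Definition cod p (x : D -> Prop) : Asm :=
  match excluded_middle_informative (mem (dom p) x) with
  | left h => decode l2 (tyf B (exist _ (p, x) h))
  | right _ => EmptyAsm end.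

Lemma cod_eq p x (h : mem (dom p) x) : cod p x = decode l2 (tyf B (exist _ (p, x) h)).
Proof.
  unfold cod. destruct (excluded_middle_informative _) as [h'|n]; [|contradiction].
  rewrite (proof_irrelevance _ h h'). reflexivity.
Qed.

Lemma Modest_cod p x : mem (dom p) x -> Modest l2 (cod p x).
Proof. intros h. rewrite (cod_eq p x h). apply Modest_decode, (proj1 (proj2_sig B)). Qed.

Definition pi_asm p := PiAsm (dom p) (cod p).

Lemma den_pi_code j p r eA eB a :
  Nat.max l1 l2 < j -> crel G j r p ->
  (forall p d, crel G j d p -> exists v, ap eA d v /\ tyf A p v) ->
  (forall q d, crel (ext' l1 G A) j d q -> exists v, ap eB d v /\ tyf B q v) ->
  ap eA r a ->
  den (Nat.max l1 l2) (cPi l1 l2 a (dClo eB r)) (pi_asm p).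
Proof.
  intros hj hr HA HB ha.
  assert (HBx : forall x s (m : mem (dom p) x), x s ->
            exists v, ap eB (dPair r s) v /\ tyf B (exist _ (p, x) m) v).
  { intros x s m hs. apply HB. exists r, s. split; auto. split; auto. simpl.
    apply (modest_high _ _ (Modest_dom p)); [lia|auto]. }
  rewrite den_eq. unfold pi_asm. constructor.
  - destruct (HA p r hr) as [a' [ha' ca]]. rewrite (ap_det _ _ _ ha _ ha').
    apply denF_decode; [apply (proj1 (proj2_sig A))|exact ca].
  - intros x m. apply (Modest_elem_inhabited _ _ _ (Modest_dom p) m).
  - intros x s m hs. destruct (HBx x s m hs) as [v [hv _]].
    exists v. constructor; auto.
  - intros x s c m hs hc. inversion hc; subst.
    destruct (HBx x s m hs) as [v [hv cv]].
    rewrite <- (ap_det _ _ _ H3 _ hv) in cv. rewrite (cod_eq p x m).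
    apply denF_decode; [apply (proj1 (proj2_sig B))|exact cv].
Qed.

Definition pi_codes p : D -> Prop := fun c => den (Nat.max l1 l2) c (pi_asm p).

Lemma pi_TyP : TyP (Nat.max l1 l2) G pi_codes.
Proof.
  destruct (proj2_sig A) as [_ TA]. destruct (proj2_sig B) as [_ TB]. split.
  - intros p. destruct (ctot G (S (Nat.max l1 l2)) p) as [r hr].
    destruct (TA (S (Nat.max l1 l2)) ltac:(lia)) as [eA HA].
    destruct (TB (S (Nat.max l1 l2)) ltac:(lia)) as [eB HB].
    destruct (HA p r hr) as [a [ha _]].
    exists (cPi l1 l2 a (dClo eB r)), (pi_asm p). split; [|reflexivity].
    eapply den_pi_code; eauto.
  - intros j hj. destruct (TA j ltac:(lia)) as [eA HA]. destruct (TB j ltac:(lia)) as [eB HB].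
    exists (dMkPi l1 l2 eA (dCurry eB)). intros p r hr.
    destruct (HA p r hr) as [a [ha _]]. exists (cPi l1 l2 a (dClo eB r)). split.
    + constructor; auto. constructor.
    + eapply den_pi_code; eauto.
Qed.

Definition Pi' : Ty' (Nat.max l1 l2) G := exist _ pi_codes pi_TyP.

Lemma decode_Pi' p : decode (Nat.max l1 l2) (tyf Pi' p) = pi_asm p.
Proof.
  destruct (proj1 pi_TyP p) as [c [T [h E]]].
  assert (T = pi_asm p).
  { eapply den_functional; [exact h|]. change (pi_codes p c). rewrite E. exact h. }
  subst T. simpl. unfold pi_codes. eapply decode_den; eauto.
Qed.

Lemma Pi'_elem (f : Tm' (Nat.max l1 l2) G) (e : tp' f = Pi') p :
  exists phi, TrackedSection (dom p) (cod p) phi /\ tmf f p = pi_class (dom p) phi.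
Proof. pose proof (Tm'_mem _ _ f _ e p) as H. rewrite decode_Pi' in H. exact H. Qed.

Definition appf (f : Tm' (Nat.max l1 l2) G) (q : pts (ext' l1 G A)) : D -> Prop :=
  app_class (decode l2 (tyf B q)) (tmf f (fst (proj1_sig q))) (snd (proj1_sig q)).

Lemma appf_eq f q phi :
  TrackedSection (dom (fst (proj1_sig q))) (cod (fst (proj1_sig q))) phi ->
  tmf f (fst (proj1_sig q)) = pi_class (dom (fst (proj1_sig q))) phi ->
  appf f q = phi (snd (proj1_sig q)).
Proof.
  intros o E. unfold appf. rewrite E. destruct q as [[p x] m]. cbn [fst snd proj1_sig] in *.
  rewrite <- (cod_eq p x m). eapply app_class_pi; eauto.
  - apply Modest_dom.
  - apply Modest_cod.
Qed.

Lemma app_TmP f (e : tp' f = Pi') : TmP l2 (ext' l1 G A) B (appf f).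
Proof.
  split.
  - intros [[p x] m]. destruct (Pi'_elem f e p) as [phi [o E]].
    rewrite (appf_eq f (exist _ (p, x) m) phi o E).
    pose proof (proj1 o x m) as H. rewrite (cod_eq p x m) in H. exact H.
  - intros j. destruct (Tm'_track _ _ f _ e j) as [ef Hf].
    exists (dAp (dComp ef dFst) dSnd). intros [[p x] m] d [r [s [-> [hr hs]]]]. cbn [fst snd proj1_sig] in *.
    destruct (Hf _ _ hr) as [w1 [hw1 rw1]].
    rewrite decode_Pi' in rw1. destruct rw1 as [phi [o [E tr]]].
    destruct (tr x s m hs) as [v [hv rv]]. exists v. split.
    + econstructor; [econstructor; [constructor|exact hw1]|constructor|exact hv].
    + rewrite (appf_eq f (exist _ (p, x) m) phi o E).
      rewrite (cod_eq p x m) in rv. exact rv.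
Qed.

Definition app' (f : Tm' (Nat.max l1 l2) G) (e : tp' f = Pi') : Tm' l2 (ext' l1 G A) :=
  exist _ (B, appf f) (app_TmP f e).

End Codomain.

Section Lambda.
Context (t : Tm' l2 (ext' l1 G A)).

Definition lam_section p (x : D -> Prop) : D -> Prop :=
  match excluded_middle_informative (mem (dom p) x) with
  | left h => tmf t (exist _ (p, x) h)
  | right _ => fun _ => False end.

Lemma lam_section_eq p x (h : mem (dom p) x) : lam_section p x = tmf t (exist _ (p, x) h).
Proof.
  unfold lam_section. destruct (excluded_middle_informative _) as [h'|n]; [|contradiction].
  rewrite (proof_irrelevance _ h h'). reflexivity.
Qed.

Lemma lam_track j r p et :
  crel G j r p ->
  (forall q d, crel (ext' l1 G A) j d q -> exists v, ap et d v /\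
      rlz (decode l2 (tyf (tp' t) q)) j v (tmf t q)) ->
  forall x s, mem (dom p) x -> rlz (dom p) j s x ->
    exists v, ap (dClo et r) s v /\ rlz (cod (tp' t) p x) j v (lam_section p x).
Proof.
  intros hr Ht x s m hs. destruct (Ht (exist _ (p, x) m) (dPair r s)) as [v [hv rv]].
  { exists r, s. auto. }
  exists v. split; [constructor; auto|].
  rewrite (cod_eq _ p x m), (lam_section_eq p x m). exact rv.
Qed.

Lemma lam_TrackedSection p : TrackedSection (dom p) (cod (tp' t) p) (lam_section p).
Proof.
  split.
  - intros x m. rewrite (cod_eq _ p x m), (lam_section_eq p x m). apply (proj1 (proj2_sig t)).
  - intros j. destruct (proj2 (proj2_sig t) j) as [et Ht]. destruct (ctot G j p) as [r hr].
    exists (dClo et r). apply lam_track; auto.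
Qed.

Definition lam_class p := pi_class (dom p) (lam_section p).

Lemma lam_TmP : TmP (Nat.max l1 l2) G (Pi' (tp' t)) lam_class.
Proof.
  split.
  - intros p. change (mem (decode (Nat.max l1 l2) (tyf (Pi' (tp' t)) p)) (lam_class p)).
    rewrite decode_Pi'. exists (lam_section p). split; auto. apply lam_TrackedSection.
  - intros j. destruct (proj2 (proj2_sig t) j) as [et Ht]. exists (dCurry et).
    intros p r hr. exists (dClo et r). split; [constructor|].
    change (rlz (decode (Nat.max l1 l2) (tyf (Pi' (tp' t)) p)) j (dClo et r) (lam_class p)).
    rewrite decode_Pi'.
    exists (lam_section p). split; [apply lam_TrackedSection|split; auto]. apply lam_track; auto.
Qed.

Definition lam' : Tm' (Nat.max l1 l2) G := exist _ (Pi' (tp' t), lam_class) lam_TmP.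

End Lambda.
End PiType.

Lemma Pi'_sub l1 l2 (G Dl : Ctx Mc) (A : Ty Mc l1 G) (B : Ty Mc l2 (ext G A)) (s : Sub Mc Dl G) :
  tsub' _ _ _ (Pi' l1 l2 G A B) s = Pi' l1 l2 Dl (tsub A s) (tsub B (lift_sub A s)).
Proof.
  apply TyE. extensionality d. simpl. unfold pi_codes. f_equal. extensionality c. f_equal.
  unfold pi_asm. apply PiAsm_ext. intros x m.
  rewrite (cod_eq _ _ _ _ _ _ x m), (cod_eq l1 l2 G A B (proj1_sig s d) x m).
  simpl. f_equal. f_equal. apply sig_eq. reflexivity.
Qed.

Definition MPi : PiStr Mc.
Proof.
  unshelve refine (@Build_PiStr Mc (fun l1 l2 G A B => Pi' l1 l2 G A B) _
     (fun l1 l2 G A t => lam' l1 l2 G A t) _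
     (fun l1 l2 G A B f e => app' l1 l2 G A B f e) _ _ _ _).
  - intros. apply Pi'_sub.
  - intros; reflexivity.
  - intros; reflexivity.
  - intros. apply TmE; [reflexivity|]. extensionality q. simpl.
    destruct q as [[p x] m].
    transitivity (lam_section l1 l2 G A t p x).
    + exact (appf_eq l1 l2 G A (tp t) (lam' l1 l2 G A t) (exist _ (p, x) m)
               (lam_section l1 l2 G A t p) (lam_TrackedSection _ _ _ _ t p) eq_refl).
    + apply lam_section_eq.
  - intros. apply TmE; [symmetry; exact e|]. extensionality p. simpl.
    destruct (Pi'_elem _ _ _ _ _ f e p) as [phi [o E]]. rewrite E. unfold lam_class.
    apply pi_class_ext. intros x m. rewrite (lam_section_eq _ _ _ _ _ _ _ m).
    apply (appf_eq _ _ _ _ _ f (exist _ (p, x) m) phi o E).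
  - intros. apply TmE.
    + apply Pi'_sub.
    + extensionality d. simpl. unfold lam_class. apply pi_class_ext. intros x m.
      rewrite (lam_section_eq _ _ _ _ _ _ _ m), (lam_section_eq l1 l2 G A t (proj1_sig s d) x m).
      refine (f_equal (tmf t) _). apply sig_eq. reflexivity.
Defined.

(** * Universes *)

Definition U' l G : Ty' (S l) G.
Proof.
  exists (fun _ c => den (S l) c (UAsm l (den l))). split.
  - intros p. exists (cU l), (UAsm l (den l)). split; auto. apply den_U.
  - intros j hj. exists (dConst (cU l)). intros p d h. exists (cU l). split; [constructor|apply den_U].
Defined.

Lemma decode_U' l G p : decode (S l) (tyf (U' l G) p) = UAsm l (den l).
Proof. simpl. eapply decode_den. apply den_U. Qed.

Definition El' l G (a : Tm' (S l) G) (e : tp' a = U' l G) : Ty' l G.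
Proof.
  exists (tmf a). pose proof (Tm'_mem _ _ a _ e) as Ha. setoid_rewrite decode_U' in Ha. split.
  - exact Ha.
  - intros j hj. destruct (Tm'_track _ _ a _ e j) as [ea Ht]. exists ea. intros p d h.
    destruct (Ht p d h) as [v [hv rv]]. exists v. split; auto.
    rewrite decode_U' in rv. destruct rv as [_ [?|?]]; [lia|auto].
Defined.

Definition code' l G (A : Ty' l G) : Tm' (S l) G.
Proof.
  exists (U' l G, tyf A). split; simpl fst; simpl snd.
  - intros p. rewrite decode_U'. apply (proj1 (proj2_sig A)).
  - intros j. destruct (le_lt_dec j l) as [hj|hj].
    + exists dId. intros p d h. exists d. split; [constructor|].
      rewrite decode_U'. apply UAsm_rlz_low; [exact hj|apply (proj1 (proj2_sig A))].
    + destruct (proj2 (proj2_sig A) j hj) as [eA HA]. exists eA. intros p d h.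
      destruct (HA p d h) as [v [hv cv]]. exists v. split; auto.
      rewrite decode_U'. split; [apply (proj1 (proj2_sig A))|right; auto].
Defined.

Definition MU : UnivStr Mc.
Proof.
  unshelve refine (@Build_UnivStr Mc (fun l G => U' l G) _ (fun l G a e => El' l G a e) _
     (fun l G A => code' l G A) _ _ _).
  - intros; apply TyE; reflexivity.
  - intros; apply TyE; reflexivity.
  - intros; reflexivity.
  - intros; apply TyE; reflexivity.
  - intros. apply TmE; [symmetry; exact e|reflexivity].
Defined.

(** * Lifting *)

Definition Lift' l G (A : Ty' l G) : Ty' (S l) G.
Proof.
  exists (fun p c => den (S l) c (decode l (tyf A p))). split.
  - intros p. destruct (proj1 (proj2_sig A) p) as [c [T [h E]]].
    exists (cLift c), (decode l (tyf A p)). split; auto.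
    rewrite den_eq. constructor. apply denF_decode; [apply (proj1 (proj2_sig A))|].
    unfold tyf. rewrite E. exact h.
  - intros j hj. destruct (proj2 (proj2_sig A) j ltac:(lia)) as [eA HA]. exists (dMkLift eA).
    intros p d h. destruct (HA p d h) as [v [hv cv]]. exists (cLift v). split; [constructor; auto|].
    rewrite den_eq. constructor. apply denF_decode; [apply (proj1 (proj2_sig A))|exact cv].
Defined.

Lemma decode_Lift' l G (A : Ty' l G) p : decode (S l) (tyf (Lift' l G A) p) = decode l (tyf A p).
Proof.
  destruct (proj1 (proj2_sig (Lift' l G A)) p) as [c [T [h E]]].
  assert (T = decode l (tyf A p)).
  { eapply den_functional; [exact h|]. change (proj1_sig (Lift' l G A) p c). rewrite E. exact h. }
  subst. simpl. eapply decode_den; eauto.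
Qed.

Definition up' l G (A : Ty' l G) (a : Tm' l G) (e : tp' a = A) : Tm' (S l) G.
Proof.
  exists (Lift' l G A, tmf a). split; simpl fst; simpl snd.
  - intros p. rewrite decode_Lift'. exact (Tm'_mem _ _ a _ e p).
  - intros j. setoid_rewrite decode_Lift'. exact (Tm'_track _ _ a _ e j).
Defined.

Definition down' l G (A : Ty' l G) (b : Tm' (S l) G) (e : tp' b = Lift' l G A) : Tm' l G.
Proof.
  exists (A, tmf b). pose proof (Tm'_mem _ _ b _ e) as Hm. pose proof (Tm'_track _ _ b _ e) as Ht.
  setoid_rewrite decode_Lift' in Hm. setoid_rewrite decode_Lift' in Ht. exact (conj Hm Ht).
Defined.

Definition ML : LiftStr Mc.
Proof.
  unshelve refine (@Build_LiftStr Mc (fun l G A => Lift' l G A) _ (fun l G A a e => up' l G A a e) _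
     (fun l G A b e => down' l G A b e) _ _ _ _).
  - intros; apply TyE; reflexivity.
  - intros; reflexivity.
  - intros; reflexivity.
  - intros. apply TmE; [symmetry; exact e|reflexivity].
  - intros. apply TmE; [symmetry; exact e|reflexivity].
  - intros. apply TmE; [apply TyE|]; reflexivity.
Defined.

(** * Non-triviality and constancy *)

Definition Empty' : Ty' 0 emp'.
Proof.
  exists (fun _ c => den 0 c EmptyAsm). split.
  - intros p. exists cEmp, EmptyAsm. split; auto. apply den_emp.
  - intros j hj. exists (dConst cEmp). intros p d h. exists cEmp. split; [constructor|apply den_emp].
Defined.

Lemma Mc_nontrivial : nontrivial Mc.
Proof.
  exists 0, Empty'. intros a e. pose proof (Tm'_mem _ _ a _ e tt) as H.
  change (mem (decode 0 (fun c' => den 0 c' EmptyAsm)) (tmf a tt)) in H.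
  rewrite (decode_den _ _ _ den_emp) in H. exact H.
Qed.

Section Constancy.
Context (l : nat) (G : Cx) (A : Tm' (S l) G) (eA : tp' A = U' l G).

Let B := tsub' l G (ext' (S l) G (U' l G)) (El' l G A eA) (wk' (S l) G (U' l G)).

Lemma TrackedSection_from_U_const p phi :
  TrackedSection (dom (S l) G (U' l G) p) (cod (S l) l G (U' l G) B p) phi ->
  forall x y, mem (dom (S l) G (U' l G) p) x -> mem (dom (S l) G (U' l G) p) y ->
  phi x = phi y.
Proof.
  intros o. apply (TrackedSection_uniform_const _ (cod (S l) l G (U' l G) B p) (decode l (tmf A p)) _ l dId).
  - apply Modest_decode. exact (proj1 (proj2_sig (El' l G A eA)) p).
  - exact o.
  - intros x m. rewrite (cod_eq _ _ _ _ _ p x m). reflexivity.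
  - intros x m. unfold dom in *. rewrite decode_U' in *. apply UAsm_rlz_low; auto.
Qed.

Lemma appf_from_U_const (f : Tm' (Nat.max (S l) l) G) (ef : tp' f = Pi' (S l) l G (U' l G) B) p x y
  (mx : mem (dom (S l) G (U' l G) p) x) (my : mem (dom (S l) G (U' l G) p) y) :
  appf (S l) l G (U' l G) B f (exist _ (p, x) mx) = appf (S l) l G (U' l G) B f (exist _ (p, y) my).
Proof.
  destruct (Pi'_elem _ _ _ _ _ f ef p) as [phi [o E]].
  rewrite (appf_eq _ _ _ _ _ f (exist _ (p, x) mx) phi o E).
  rewrite (appf_eq _ _ _ _ _ f (exist _ (p, y) my) phi o E).
  exact (TrackedSection_from_U_const p phi o x y mx my).
Qed.

End Constancy.

Theorem mainTheorem1 :
  exists (C : CwF) (P : PiStr C) (Un : UnivStr C) (L : LiftStr C),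
    nontrivial C /\
    forall (l : nat) (G : Ctx C)
      (A : Tm C (S l) G) (eA : tp A = U (u:=Un) l G)
      (f : Tm C (Nat.max (S l) l) G)
      (ef : tp f = Pi (p:=P) (U (u:=Un) l G) (tsub (El (u:=Un) A eA) (wk (U (u:=Un) l G))))
      (X Y : Tm C (S l) G) (eX : tp X = U (u:=Un) l G) (eY : tp Y = U (u:=Un) l G),
      apply (U (u:=Un) l G) (tsub (El (u:=Un) A eA) (wk (U (u:=Un) l G))) f ef X eX
      = apply (U (u:=Un) l G) (tsub (El (u:=Un) A eA) (wk (U (u:=Un) l G))) f ef Y eY.
Proof.
  exists Mc, MPi, MU, ML. split; [exact Mc_nontrivial|].
  intros l G A eA f ef X Y eX eY.
  apply TmE; [apply TyE; reflexivity|].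
  extensionality p. exact (appf_from_U_const l G A eA f ef p _ _ _ _).
Qed.
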